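(* Let $X$ be a compact metric space and let $f\colon X\to X$ be an $n$-expansive homeomorphism with the L-shadowing property. Then there exists $\varepsilon>0$ such that $\bar{n}(x,\varepsilon)\cdot n(x,\varepsilon)\leq n$ for every $x\in X$. If, in addition, $f$ is transitive, then $\bar{n}(x,\varepsilon)\cdot n(y,\varepsilon)\leq n$ for every $x,y\in X$.
   Context: Let $(X,d)$ be a compact metric space and $f\colon X\to X$ a homeomorphism. For $x\in X$ and $c>0$: $W^s_c(x)=\{y: d(f^k(y),f^k(x))\leq c\ \forall k\geq0\}$, $W^u_c(x)=\{y: d(f^k(y),f^k(x))\leq c\ \forall k\leq0\}$, $W^s(x)=\{y: d(f^k(y),f^k(x))\to0 \text{ as } k\to\infty\}$, $W^u(x)=\{y: d(f^k(y),f^k(x))\to0 \text{ as } k\to-\infty\}$. $f$ is $n$-expansive if there is $c>0$ such that $W^s_c(x)\cap W^u_c(x)$ has at most $n$ points for every $x\in X$. The number $n(x,\varepsilon)$ of different stable sets in $W^s_\varepsilon(x)$ is the largest cardinality of a subset $E\subset W^s_\varepsilon(x)$ such that any two distinct $y,z\in E$ satisfy $y\notin W^s(z)$ (so any $n(x,\varepsilon)+1$ distinct points of $W^s_\varepsilon(x)$ contain two distinct points in the same stable set). Analogously $\bar n(x,\varepsilon)$ is the largest cardinality of a subset of $W^u_\varepsilon(x)$ whose distinct points lie in pairwise different unstable sets. A $\delta$-pseudo orbit is $(x_k)_{k\in\mathbb{Z}}$ with $d(f(x_k),x_{k+1})<\delta$ for all $k$; a two-sided limit pseudo orbit satisfies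 $d(f(x_k),x_{k+1})\to0$ as $|k|\to\infty$. $z$ $\varepsilon$-shadows $(x_k)$ if $d(f^k(z),x_k)<\varepsilon$ for all $k$, and two-sided limit shadows it if $d(f^k(z),x_k)\to0$ as $|k|\to\infty$. $f$ has the L-shadowing property if for every $\varepsilon>0$ there is $\delta>0$ such that every $\delta$-pseudo orbit that is also a two-sided limit pseudo orbit is both $\varepsilon$-shadowed and two-sided limit shadowed by a single point. $f$ is transitive if for every nonempty open $U,V$ there is $k\in\mathbb{N}$ with $f^k(U)\cap V\neq\emptyset$. *)

From Stdlib Require Import Reals Lra Lia ZArith List.
Open Scope R_scope.

Definition is_metric (X : Type) (d : X -> X -> R) : Prop :=
  (forall x y, d x y = 0 <-> x = y) /\
  (forall x y, d x y = d y x) /\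
  (forall x y z, d x z <= d x y + d y z).

Definition is_open {X : Type} (d : X -> X -> R) (U : X -> Prop) : Prop :=
  forall x, U x -> exists r, 0 < r /\ forall y, d x y < r -> U y.

Definition is_compact {X : Type} (d : X -> X -> R) : Prop :=
  forall (I : Type) (U : I -> X -> Prop),
    (forall i, is_open d (U i)) -> (forall x, exists i, U i x) ->
    exists l : list I, forall x, exists i, In i l /\ U i x.

Definition continuous_map {X : Type} (d : X -> X -> R) (f : X -> X) : Prop :=
  forall x e, 0 < e -> exists r, 0 < r /\ forall y, d x y < r -> d (f x) (f y) < e.

Definition homeo_with_inv {X : Type} (d : X -> X -> R) (f g : X -> X) : Prop :=
  continuous_map d f /\ continuous_map d g /\
  (forall x, g (f x) = x) /\ (forall x, f (g x) = x).

Definition iterZ {X : Type} (f g : X -> X) (k : Z) (x : X) : X :=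
  match k with
  | Z0 => x
  | Zpos p => Nat.iter (Pos.to_nat p) f x
  | Zneg p => Nat.iter (Pos.to_nat p) g x
  end.

Section Dyn.
Context {X : Type} (d : X -> X -> R) (f g : X -> X).

Definition Ws_c (c : R) (x y : X) : Prop :=
  forall k : Z, (0 <= k)%Z -> d (iterZ f g k y) (iterZ f g k x) <= c.
Definition Wu_c (c : R) (x y : X) : Prop :=
  forall k : Z, (k <= 0)%Z -> d (iterZ f g k y) (iterZ f g k x) <= c.
Definition Ws (x y : X) : Prop :=
  forall e, 0 < e -> exists N : Z, forall k : Z, (N <= k)%Z ->
    d (iterZ f g k y) (iterZ f g k x) < e.
Definition Wu (x y : X) : Prop :=
  forall e, 0 < e -> exists N : Z, forall k : Z, (k <= N)%Z ->
    d (iterZ f g k y) (iterZ f g k x) < e.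

Definition n_expansive (n : nat) : Prop :=
  exists c, 0 < c /\ forall x (E : list X), NoDup E ->
    (forall y, In y E -> Ws_c c x y /\ Wu_c c x y) -> (length E <= n)%nat.

(* k is the largest cardinality of a finite set (duplicate-free list) with property P *)
Definition is_max_card (P : list X -> Prop) (k : nat) : Prop :=
  (exists E, NoDup E /\ P E /\ length E = k) /\
  (forall E, NoDup E -> P E -> (length E <= k)%nat).

Definition n_stable (x : X) (eps : R) (k : nat) : Prop :=
  is_max_card (fun E => (forall y, In y E -> Ws_c eps x y) /\
     forall y z, In y E -> In z E -> y <> z -> ~ Ws z y) k.
Definition n_unstable (x : X) (eps : R) (k : nat) : Prop :=
  is_max_card (fun E => (forall y, In y E -> Wu_c eps x y) /\
     forall y z, In y E -> In z E -> y <> z -> ~ Wu z y) k.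

Definition pseudo_orbit (delta : R) (xs : Z -> X) : Prop :=
  forall k, d (f (xs k)) (xs (k + 1)%Z) < delta.

Definition limit_pseudo_orbit (xs : Z -> X) : Prop :=
  forall e, 0 < e -> exists N : Z, forall k : Z, (N <= Z.abs k)%Z ->
    d (f (xs k)) (xs (k + 1)%Z) < e.

Definition L_shadowing : Prop :=
  forall eps, 0 < eps -> exists delta, 0 < delta /\
    forall xs : Z -> X, pseudo_orbit delta xs -> limit_pseudo_orbit xs ->
      exists z,
        (forall k, d (iterZ f g k z) (xs k) < eps) /\
        (forall e, 0 < e -> exists N : Z, forall k : Z, (N <= Z.abs k)%Z ->
           d (iterZ f g k z) (xs k) < e).

Definition transitive : Prop :=
  forall U V : X -> Prop, is_open d U -> is_open d V ->
    (exists x, U x) -> (exists x, V x) ->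
    exists k : nat, (1 <= k)%nat /\ exists x, U x /\ V (Nat.iter k f x).

End Dyn.

From Stdlib Require Import Reals ZArith List Lra Lia Classical ClassicalEpsilon FinFun.
Import ListNotations.
Open Scope R_scope.

(** Let c be an expansivity constant, δ the L-shadowing constant for the
    scale c/4, and ε = min (c/4) (δ/8).  Take a point u that is δ/4-close to x
    and whose N-th iterate is δ/4-close to y (u = x and N = 0 when x = y;
    transitivity provides such a u in general).  For p ∈ W^u_ε(x) and
    q ∈ W^s_ε(y), the backward orbit of p, followed by u, ..., f^(N-1) u,
    followed by the forward orbit of q, is a δ-pseudo orbit with only two
    jumps, hence is L-shadowed by a point z(p,q).  This point is asymptotic to
    p in the past and to (a shift of) q in the future, so it determines the
    unstable set of p and the stable set of q; and it stays c/4 + ε + c/4 <= c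
    close to z(x,y).  Therefore the pairs formed from a family of pairwise
    unstably inequivalent points of W^u_ε(x) and one of pairwise stably
    inequivalent points of W^s_ε(y) inject into
    W^s_c(z(x,y)) ∩ W^u_c(z(x,y)), which has at most n points. *)

Lemma bounded_nat_pred_has_max (P : nat -> Prop) (n : nat) :
  (exists j, P j) -> (forall j, P j -> (j <= n)%nat) ->
  exists k, P k /\ forall j, P j -> (j <= k)%nat.
Proof.
  induction n as [|n IH]; intros [j Pj] Hbound.
  - exists j. split; [exact Pj|]. intros i Pi.
    pose proof (Hbound _ Pj). pose proof (Hbound _ Pi). lia.
  - destruct (classic (P (S n))) as [PSn|nPSn].
    + exists (S n). auto.
    + apply IH; [now exists j|]. intros i Pi.
      pose proof (Hbound _ Pi). destruct (Nat.eq_dec i (S n)); [subst; contradiction|lia].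
Qed.

Lemma is_max_card_mul_le {A : Type} (P Q : list A -> Prop) (a0 b0 : A) (n : nat) :
  P [a0] -> Q [b0] ->
  (forall E F, NoDup E -> P E -> NoDup F -> Q F -> (length E * length F <= n)%nat) ->
  exists a b, is_max_card P a /\ is_max_card Q b /\ (a * b <= n)%nat.
Proof.
  intros Pa0 Qb0 Hmul.
  assert (single : forall z : A, NoDup [z]) by (intros; repeat constructor; auto).
  destruct (bounded_nat_pred_has_max (fun j => exists E, NoDup E /\ P E /\ length E = j) n)
    as [a [[E [NoDupE [PE <-]]] maxE]].
  { exists 1%nat, [a0]. auto. }
  { intros j [E [NoDupE [PE <-]]].
    pose proof (Hmul E [b0] NoDupE PE (single b0) Qb0). simpl in *. lia. }
  destruct (bounded_nat_pred_has_max (fun j => exists F, NoDup F /\ Q F /\ length F = j) n)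
    as [b [[F [NoDupF [QF <-]]] maxF]].
  { exists 1%nat, [b0]. auto. }
  { intros j [F [NoDupF [QF <-]]].
    pose proof (Hmul [a0] F (single a0) Pa0 NoDupF QF). simpl in *. lia. }
  exists (length E), (length F). repeat split; eauto.
Qed.

Lemma NoDup_list_prod {A B : Type} (E : list A) (F : list B) :
  NoDup E -> NoDup F -> NoDup (list_prod E F).
Proof.
  intros NoDupE NoDupF.
  induction NoDupE as [|a E notinE NoDupE IH]; simpl; [constructor|].
  apply NoDup_app; auto.
  - apply Injective_map_NoDup; auto. intros b b' H. now inversion H.
  - intros [a' b] Hin1 Hin2. apply in_map_iff in Hin1.
    destruct Hin1 as [b' [Heq _]]. inversion Heq; subst.
    apply in_prod_iff in Hin2. tauto.
Qed.

Section Dynamics.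

Variables (X : Type) (d : X -> X -> R) (f g : X -> X).
Hypothesis d_metric : is_metric X d.
Hypothesis f_g : forall x, f (g x) = x.

Lemma dist_refl x : d x x = 0.
Proof. apply d_metric. reflexivity. Qed.

Lemma dist_sym x y : d x y = d y x.
Proof. apply d_metric. Qed.

Lemma dist_triangle x y z : d x z <= d x y + d y z.
Proof. apply d_metric. Qed.

Lemma dist_nonneg x y : 0 <= d x y.
Proof.
  pose proof (dist_triangle x y x). rewrite dist_refl, (dist_sym y x) in *. lra.
Qed.

Lemma ball_open x r : is_open d (fun z => d x z < r).
Proof.
  intros z Hz. exists (r - d x z). split; [lra|]. intros w Hw.
  pose proof (dist_triangle x z w). lra.
Qed.

Lemma iterZ_nonneg k z : (0 <= k)%Z -> iterZ f g k z = Nat.iter (Z.to_nat k) f z.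
Proof. intros Hk. destruct k; simpl; try reflexivity. lia. Qed.

Lemma iterZ_nonpos k z : (k <= 0)%Z -> iterZ f g k z = Nat.iter (Z.to_nat (- k)) g z.
Proof. intros Hk. destruct k; simpl; try reflexivity. lia. Qed.

Lemma iterZ_succ k z : iterZ f g (k + 1) z = f (iterZ f g k z).
Proof.
  destruct (Z_le_gt_dec 0 k).
  - rewrite !iterZ_nonneg by lia.
    replace (Z.to_nat (k + 1)) with (S (Z.to_nat k)) by lia. reflexivity.
  - rewrite !iterZ_nonpos by lia.
    replace (Z.to_nat (- k)) with (S (Z.to_nat (- (k + 1)))) by lia.
    simpl. now rewrite f_g.
Qed.

Definition unstable_separated (eps : R) (x : X) (E : list X) : Prop :=
  (forall y, In y E -> Wu_c d f g eps x y) /\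
  forall y z, In y E -> In z E -> y <> z -> ~ Wu d f g z y.

Definition stable_separated (eps : R) (x : X) (E : list X) : Prop :=
  (forall y, In y E -> Ws_c d f g eps x y) /\
  forall y z, In y E -> In z E -> y <> z -> ~ Ws d f g z y.

Lemma Wu_c_refl eps x : 0 <= eps -> Wu_c d f g eps x x.
Proof. intros Heps k _. rewrite dist_refl. exact Heps. Qed.

Lemma Ws_c_refl eps x : 0 <= eps -> Ws_c d f g eps x x.
Proof. intros Heps k _. rewrite dist_refl. exact Heps. Qed.

Lemma unstable_separated_single eps x : 0 <= eps -> unstable_separated eps x [x].
Proof.
  intros Heps. split.
  - intros y [<-|[]]. now apply Wu_c_refl.
  - intros y z [<-|[]] [<-|[]]. tauto.
Qed.

Lemma stable_separated_single eps x : 0 <= eps -> stable_separated eps x [x].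
Proof.
  intros Heps. split.
  - intros y [<-|[]]. now apply Ws_c_refl.
  - intros y z [<-|[]] [<-|[]]. tauto.
Qed.

Definition glued (p u q : X) (N : Z) (k : Z) : X :=
  if (k <? 0)%Z then iterZ f g k p
  else if (k <? N)%Z then iterZ f g k u
  else iterZ f g (k - N) q.

Lemma glued_succ p u q N k : (0 <= N)%Z -> k <> (-1)%Z -> k <> (N - 1)%Z ->
  f (glued p u q N k) = glued p u q N (k + 1).
Proof.
  intros HN Hk1 Hk2. unfold glued.
  destruct (Z.ltb_spec k 0); destruct (Z.ltb_spec (k + 1) 0);
    destruct (Z.ltb_spec k N); destruct (Z.ltb_spec (k + 1) N); try lia;
    rewrite <- iterZ_succ; [reflexivity|reflexivity|f_equal; lia].
Qed.

Lemma glued_pseudo_orbit x y p u q N eps delta :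
  (0 <= N)%Z -> eps <= delta / 8 ->
  Wu_c d f g eps x p -> Ws_c d f g eps y q ->
  d x u < delta / 4 -> d (iterZ f g N u) y < delta / 4 ->
  pseudo_orbit d f delta (glued p u q N).
Proof.
  intros HN Heps Hp Hq Hu HuN k.
  assert (Hpx : d p x <= eps) by (apply (Hp 0%Z); lia).
  assert (Hyq : d y q <= eps) by (rewrite dist_sym; apply (Hq 0%Z); lia).
  assert (Hdelta : 0 < delta) by (pose proof (dist_nonneg x u); lra).
  destruct (Z.eq_dec k (-1)) as [->|Hk1].
  - replace (glued p u q N (-1)) with (g p) by reflexivity. rewrite f_g.
    unfold glued. simpl. destruct (Z.ltb_spec 0 N).
    + pose proof (dist_triangle p x u). lra.
    + assert (N = 0%Z) by lia. subst N. simpl in *.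
      pose proof (dist_triangle p x u). pose proof (dist_triangle p u q).
      pose proof (dist_triangle u y q). lra.
  - destruct (Z.eq_dec k (N - 1)) as [->|Hk2].
    + unfold glued.
      destruct (Z.ltb_spec (N - 1) 0); try lia.
      destruct (Z.ltb_spec (N - 1) N); try lia.
      destruct (Z.ltb_spec (N - 1 + 1) 0); try lia.
      destruct (Z.ltb_spec (N - 1 + 1) N); try lia.
      rewrite <- iterZ_succ. replace (N - 1 + 1)%Z with N by lia.
      replace (N - N)%Z with 0%Z by lia. simpl.
      pose proof (dist_triangle (iterZ f g N u) y q). lra.
    + rewrite glued_succ, dist_refl by auto. lra.
Qed.

Lemma glued_limit_pseudo_orbit p u q N : (0 <= N)%Z -> limit_pseudo_orbit d f (glued p u q N).
Proof.
  intros HN e He. exists (N + 2)%Z. intros k Hk.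
  rewrite glued_succ, dist_refl by lia. exact He.
Qed.

Lemma glued_dist_le x y p u q N eps k :
  0 <= eps -> Wu_c d f g eps x p -> Ws_c d f g eps y q ->
  d (glued p u q N k) (glued x u y N k) <= eps.
Proof.
  intros Heps Hp Hq. unfold glued.
  destruct (Z.ltb_spec k 0); [apply Hp; lia|].
  destruct (Z.ltb_spec k N); [rewrite dist_refl; exact Heps|].
  apply Hq. lia.
Qed.

Definition shadows (s : R) (ys : Z -> X) (z : X) : Prop :=
  (forall k, d (iterZ f g k z) (ys k) < s) /\
  (forall e, 0 < e -> exists N : Z, forall k : Z, (N <= Z.abs k)%Z ->
     d (iterZ f g k z) (ys k) < e).

Lemma shadows_common_asymptotic s s' ys ys' z :
  shadows s ys z -> shadows s' ys' z ->
  forall e, 0 < e -> exists N : Z, forall k : Z, (N <= Z.abs k)%Z -> d (ys k) (ys' k) < e.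
Proof.
  intros [_ Hys] [_ Hys'] e He.
  destruct (Hys (e / 2)) as [N1 HN1]; [lra|].
  destruct (Hys' (e / 2)) as [N2 HN2]; [lra|].
  exists (Z.max N1 N2). intros k Hk.
  specialize (HN1 k ltac:(lia)). specialize (HN2 k ltac:(lia)).
  pose proof (dist_triangle (ys k) (iterZ f g k z) (ys' k)).
  rewrite (dist_sym (ys k) (iterZ f g k z)) in *. lra.
Qed.

Lemma shadows_glued_Wu_Ws s p u q p' q' N z :
  (0 <= N)%Z -> shadows s (glued p u q N) z -> shadows s (glued p' u q' N) z ->
  Wu d f g p' p /\ Ws d f g q' q.
Proof.
  intros HN Hz Hz'.
  pose proof (shadows_common_asymptotic _ _ _ _ _ Hz Hz') as Hasym.
  split; intros e He; destruct (Hasym e He) as [M HM].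
  - exists (- Z.max 0 M - 1)%Z. intros k Hk.
    specialize (HM k ltac:(lia)). unfold glued in HM.
    destruct (Z.ltb_spec k 0); [exact HM|lia].
  - exists (Z.max 0 M). intros j Hj.
    specialize (HM (j + N)%Z ltac:(lia)). unfold glued in HM.
    destruct (Z.ltb_spec (j + N) 0); [lia|].
    destruct (Z.ltb_spec (j + N) N); [lia|].
    replace (j + N - N)%Z with j in HM by lia. exact HM.
Qed.

Lemma shadows_glued_dist_le s x y p u q N z w eps :
  0 <= eps -> Wu_c d f g eps x p -> Ws_c d f g eps y q ->
  shadows s (glued p u q N) z -> shadows s (glued x u y N) w ->
  forall k, d (iterZ f g k z) (iterZ f g k w) <= s + eps + s.
Proof.
  intros Heps Hp Hq [Hz _] [Hw _] k.
  pose proof (glued_dist_le x y p u q N eps k Heps Hp Hq).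
  specialize (Hz k). specialize (Hw k). rewrite dist_sym in Hw.
  pose proof (dist_triangle (iterZ f g k z) (glued p u q N k) (iterZ f g k w)).
  pose proof (dist_triangle (glued p u q N k) (glued x u y N k) (iterZ f g k w)).
  lra.
Qed.

Section Counting.

Variables (n : nat) (c delta eps : R).
Hypothesis expansive : forall w (E : list X), NoDup E ->
  (forall z, In z E -> Ws_c d f g c w z /\ Wu_c d f g c w z) -> (length E <= n)%nat.
Hypothesis shadowing : forall ys, pseudo_orbit d f delta ys -> limit_pseudo_orbit d f ys ->
  exists z, shadows (c / 4) ys z.
Hypothesis eps_pos : 0 < eps.
Hypothesis eps_le_c : eps <= c / 4.
Hypothesis eps_le_delta : eps <= delta / 8.
Variables (x y u : X) (N : Z).
Hypothesis N_nonneg : (0 <= N)%Z.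
Hypothesis u_near_x : d x u < delta / 4.
Hypothesis iter_u_near_y : d (iterZ f g N u) y < delta / 4.

Lemma glued_shadow_choice : exists h : X * X -> X, forall p q,
  Wu_c d f g eps x p -> Ws_c d f g eps y q -> shadows (c / 4) (glued p u q N) (h (p, q)).
Proof.
  destruct (choice (fun (pq : X * X) z => Wu_c d f g eps x (fst pq) ->
              Ws_c d f g eps y (snd pq) -> shadows (c / 4) (glued (fst pq) u (snd pq) N) z))
    as [h Hh].
  - intros [p q]. simpl.
    destruct (classic (Wu_c d f g eps x p /\ Ws_c d f g eps y q)) as [[Hp Hq]|Hpq].
    + destruct (shadowing (glued p u q N)) as [z Hz].
      * exact (glued_pseudo_orbit x y p u q N eps delta N_nonneg eps_le_delta Hp Hq
                 u_near_x iter_u_near_y).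
      * exact (glued_limit_pseudo_orbit p u q N N_nonneg).
      * exists z. auto.
    + exists x. tauto.
  - exists h. intros p q. exact (Hh (p, q)).
Qed.

Lemma separated_card_mul_le E F :
  NoDup E -> unstable_separated eps x E -> NoDup F -> stable_separated eps y F ->
  (length E * length F <= n)%nat.
Proof.
  intros NoDupE [EWu Esep] NoDupF [FWs Fsep].
  destruct glued_shadow_choice as [h Hh].
  assert (Hxy : shadows (c / 4) (glued x u y N) (h (x, y))).
  { apply Hh; [apply Wu_c_refl|apply Ws_c_refl]; lra. }
  rewrite <- length_prod, <- (length_map h).
  apply (expansive (h (x, y))).
  - apply Injective_map_NoDup_in; [|apply NoDup_list_prod; assumption].
    intros [p q] [p' q'] Hin Hin' Heq.
    apply in_prod_iff in Hin, Hin'. destruct Hin as [Ep Fq], Hin' as [Ep' Fq'].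
    pose proof (Hh p q (EWu p Ep) (FWs q Fq)) as Hz. rewrite Heq in Hz.
    destruct (shadows_glued_Wu_Ws _ _ _ _ _ _ _ _ N_nonneg Hz (Hh p' q' (EWu p' Ep') (FWs q' Fq')))
      as [Hpp' Hqq'].
    destruct (classic (p = p')) as [<-|Hne]; [|exfalso; exact (Esep p p' Ep Ep' Hne Hpp')].
    destruct (classic (q = q')) as [<-|Hne]; [reflexivity|exfalso; exact (Fsep q q' Fq Fq' Hne Hqq')].
  - intros z Hz. apply in_map_iff in Hz. destruct Hz as [[p q] [<- Hin]].
    apply in_prod_iff in Hin. destruct Hin as [Ep Fq].
    pose proof (shadows_glued_dist_le _ _ _ _ _ _ _ _ _ eps ltac:(lra) (EWu p Ep) (FWs q Fq)
                  (Hh p q (EWu p Ep) (FWs q Fq)) Hxy) as Hclose.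
    split; intros k _; specialize (Hclose k); lra.
Qed.

Lemma connected_points_card_mul_le : exists a b,
  n_unstable d f g x eps a /\ n_stable d f g y eps b /\ (a * b <= n)%nat.
Proof.
  apply (is_max_card_mul_le _ _ x y).
  - apply unstable_separated_single. lra.
  - apply stable_separated_single. lra.
  - exact separated_card_mul_le.
Qed.

End Counting.

End Dynamics.

Theorem theoremC (X : Type) (d : X -> X -> R) (f g : X -> X) (n : nat) :
  is_metric X d -> is_compact d -> homeo_with_inv d f g ->
  n_expansive d f g n -> L_shadowing d f g ->
  exists eps, 0 < eps /\
    (forall x, exists a b, n_unstable d f g x eps a /\ n_stable d f g x eps b /\
        (a * b <= n)%nat) /\
    (transitive d f ->
      forall x y, exists a b, n_unstable d f g x eps a /\ n_stable d f g y eps b /\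
        (a * b <= n)%nat).
Proof.
  intros Hd _ [_ [_ [_ Hfg]]] [c [Hc Hexp]] HL.
  destruct (HL (c / 4)) as [delta [Hdelta Hshad]]; [lra|].
  set (eps := Rmin (c / 4) (delta / 8)).
  assert (Heps : 0 < eps) by (apply Rmin_glb_lt; lra).
  pose proof (connected_points_card_mul_le X d f g Hd Hfg n c delta eps Hexp Hshad Heps
                (Rmin_l _ _) (Rmin_r _ _)) as Hbound.
  exists eps. split; [exact Heps|split].
  - intros x. apply (Hbound x x x 0%Z); [lia| |simpl]; rewrite dist_refl by exact Hd; lra.
  - intros Htrans x y.
    destruct (Htrans (fun z => d x z < delta / 4) (fun z => d y z < delta / 4))
      as [k [_ [u [Hu Hku]]]].
    + exact (ball_open X d Hd x _).
    + exact (ball_open X d Hd y _).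
    + exists x. rewrite dist_refl by exact Hd. lra.
    + exists y. rewrite dist_refl by exact Hd. lra.
    + apply (Hbound x y u (Z.of_nat k)); [lia|exact Hu|].
      rewrite iterZ_nonneg, Nat2Z.id, dist_sym by (exact Hd || lia). exact Hku.
Qed.
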